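(* There is no pair $(\Lambda,\Lambda')$, where $\Lambda$ is a well-rounded lattice of rank $9$ in a $9$-dimensional Euclidean space and $\Lambda'$ is a sublattice generated by $9$ linearly independent minimal vectors of $\Lambda$, such that $\Lambda/\Lambda'\cong(\mathbb Z/3\mathbb Z)^3$.
   Context: Minimal vectors of a lattice are its nonzero vectors of smallest norm $x\cdot x$; a lattice is well-rounded if its minimal vectors span the ambient space. *)

From HB Require Import structures.
From mathcomp Require Import all_boot all_order all_algebra.
From mathcomp Require Import reals.
Set Implicit Arguments. Unset Strict Implicit. Unset Printing Implicit Defensive.
Import Order.TTheory GRing.Theory Num.Theory.
Local Open Scope ring_scope.

Definition in_lattice (R : realType) (m n : nat) (B : 'M[R]_(m, n)) (x : 'rV[R]_n) : Prop :=
  exists z : 'rV[int]_m, x = map_mx (fun k : int => k%:~R) z *m B.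

Definition dot (R : realType) (n : nat) (x y : 'rV[R]_n) : R := (x *m y^T) 0 0.

Definition minimal_vec (R : realType) (n : nat) (B : 'M[R]_n) (v : 'rV[R]_n) : Prop :=
  [/\ in_lattice B v, v != 0 &
      forall w, in_lattice B w -> w != 0 -> dot v v <= dot w w].

(* Well-rounded: the minimal vectors span the ambient space R^n, i.e. some
   finite family of minimal vectors (rows of M) spans R^n. *)
Definition well_rounded (R : realType) (n : nat) (B : 'M[R]_n) : Prop :=
  exists (k : nat) (M : 'M[R]_(k, n)), (forall i, minimal_vec B (row i M)) /\ row_full M.

(* Lambda / Lambda' is isomorphic to the abelian group G: there is an additive
   map from Lambda onto G whose kernel is exactly Lambda' (first iso theorem). *)
Definition quot_iso (R : realType) (n : nat) (B V : 'M[R]_n) (G : zmodType) : Prop :=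
  exists f : 'rV[R]_n -> G,
    [/\ forall x y, in_lattice B x -> in_lattice B y -> f (x + y) = f x + f y,
        forall g : G, exists2 x, in_lattice B x & f x = g &
        forall x, in_lattice B x -> (f x = 0 <-> in_lattice V x)].

From mathcomp Require Import all_boot all_order all_algebra.
From mathcomp Require Import reals zify ring lra.
Set Implicit Arguments. Unset Strict Implicit. Unset Printing Implicit Defensive.
Import Order.TTheory GRing.Theory Num.Theory.
Local Open Scope ring_scope.

(* Let f : L -> (Z/3)^3 be the quotient map and e_1, ..., e_9 the minimal
   vectors (of norm mu) spanning L'.  Every t in (Z/3)^3 lifts to some y_t in L
   with 3 y_t = sum_i c_i(t) e_i, where c_i(t) in {-1, 0, 1} is the balanced
   residue of a linear form phi_i at t.  For t <> 0, comparing |y_t|^2 with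
   |y_t - c_i(t) e_i|^2 >= mu shows that the ternary code t |-> (phi_i(t))_i has
   minimum weight at least 6.  Counting common zeros, together with a finite
   computation over the 27 forms, then forces the phi_i to be nonzero and
   pairwise independent, and for such forms sum_t c_i(t) c_j(t) = 18 [i = j].
   Hence sum_t |3 y_t|^2 = 9 * 18 mu = 162 mu, whereas each of the 26 nonzero t
   contributes at least 9 mu, i.e. 234 mu in total. *)

Definition trits : seq int := [:: -1; 0; 1].

Fixpoint trit_words (d : nat) : seq (seq int) :=
  if d is d'.+1 then [seq x :: s | x <- trits, s <- trit_words d'] else [:: [::]].

Lemma mem_trit_words d t :
  (t \in trit_words d) = (size t == d) && all (mem trits) t.
Proof.
elim: d t => [|d IH] t; first by case: t.
apply/allpairsP/idP => [[[x s] /= [xT + ->]]|].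
  by rewrite IH /= eqSS xT.
case: t => [|x t] //= /and3P[st xT tT].
by exists (x, t); rewrite /= IH -eqSS st tT.
Qed.

Definition balmod3 (z : int) : int :=
  let r := (z %% 3)%Z in if r == 2 then -1 else r.

Lemma balmod3_trit z : balmod3 z \in trits.
Proof.
rewrite /balmod3; have : ((z %% 3 = 0) \/ (z %% 3 = 1) \/ (z %% 3 = 2))%Z by lia.
by case=> [->|[->|->]].
Qed.

Lemma balmod3E z : z = balmod3 z + ((z - balmod3 z) %/ 3)%Z * 3.
Proof.
rewrite /balmod3; have : ((z %% 3 = 0) \/ (z %% 3 = 1) \/ (z %% 3 = 2))%Z by lia.
by case=> [e|[e|e]]; rewrite e /=; lia.
Qed.

Definition bdot (a t : seq int) : int := balmod3 (\sum_(0 <= k < size a) a`_k * t`_k).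

Definition common_zeros (a b : seq int) : nat :=
  count (fun t => [&& has (predC1 0) t, bdot a t == 0 & bdot b t == 0]) (trit_words 3).

Definition corr (a b : seq int) : int := \sum_(t <- trit_words 3) bdot a t * bdot b t.

Lemma count_nonzero_trit_words : count (has (predC1 0)) (trit_words 3) = 26%N.
Proof. by vm_compute. Qed.

(* A form [b] is either proportional to a nonzero form [a] (8 common zeros), or
   independent of it (2 common zeros), and then orthogonal to it. *)
Definition forms_dichotomy (a b : seq int) : bool :=
  ~~ has (predC1 0) a ||
  [&& common_zeros a a == 8, corr a a == 18 &
      (common_zeros a b == 8) || [&& common_zeros a b == 2, has (predC1 0) b & corr a b == 0]].

Lemma trit_forms_dichotomy : {in trit_words 3 &, forall a b, forms_dichotomy a b}.
Proof. by apply/allrelP; rewrite /forms_dichotomy /common_zeros /corr /bdot unlock; vm_compute. Qed.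

Lemma bdot_zero_form a t : ~~ has (predC1 0) a -> bdot a t = 0.
Proof.
move/hasPn => a0; rewrite /bdot big_nat big1 // => k /andP[_ ka].
by have := a0 _ (mem_nth 0 ka); rewrite /= negbK => /eqP->; rewrite mul0r.
Qed.

Section TernaryCode.
Variable a : 'I_9 -> seq int.
Hypothesis a_words : forall i, a i \in trit_words 3.
Hypothesis a_weight : forall t, t \in trit_words 3 -> has (predC1 0) t ->
  (#|[pred i | bdot (a i) t == 0%R]| + 6 <= 9)%N.

(* Every nonzero point is a zero of at most three of the forms. *)
Lemma sum_common_zeros p :
  (\sum_i common_zeros (a p) (a i) <= 3 * common_zeros (a p) (a p))%N.
Proof.
rewrite /common_zeros.
under eq_bigr do rewrite -sum1_count big_mkcond.
rewrite -sum1_count big_distrr [X in (_ <= X)%N]big_mkcond exchange_big.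
rewrite !big_seq; apply: leq_sum => t tw; rewrite andbb.
case: ifP => [/andP[tnz tp]|tp]; last by rewrite big1 // => i _; rewrite andbA tp.
by rewrite tnz tp /= -big_mkcond sum1_card -(leq_add2r 6); apply: a_weight.
Qed.

(* Each count [common_zeros (a p) (a i)] is at least 2, and it is 8 when
   [a i] is proportional to [a p]; sum_common_zeros leaves room for one 8 only. *)
Lemma nonzero_form_independent p j : has (predC1 0) (a p) -> j != p ->
  has (predC1 0) (a j) /\ corr (a p) (a j) = 0.
Proof.
move=> nzp jp.
have dich i : [&& common_zeros (a p) (a p) == 8, corr (a p) (a p) == 18 &
    (common_zeros (a p) (a i) == 8)
    || [&& common_zeros (a p) (a i) == 2, has (predC1 0) (a i) & corr (a p) (a i) == 0]].
  by have := trit_forms_dichotomy (a_words p) (a_words i); rewrite /forms_dichotomy nzp.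
have cpp : common_zeros (a p) (a p) = 8 by case/and3P: (dich p) => /eqP.
have lb i : (2 + 6 * (common_zeros (a p) (a i) == 8) <= common_zeros (a p) (a i))%N.
  by case/and3P: (dich i) => _ _ /orP[/eqP->|/and3P[/eqP-> _ _]].
case/and3P: (dich j) => _ _ /orP[cj8|/and3P[_ -> /eqP->]] //; exfalso.
have : (\sum_i (2 + 6 * (common_zeros (a p) (a i) == 8)) <= 3 * common_zeros (a p) (a p))%N.
  apply: leq_trans (sum_common_zeros p).
  by apply: leq_sum => i _; exact: lb.
rewrite big_split /= -big_distrr /= big_const_ord /= (bigD1 p) //= (bigD1 j) //=.
rewrite cpp cj8 eqxx; move: (\sum_(i | _) _)%N => u; lia.
Qed.

Lemma exists_nonzero_form : exists p, has (predC1 0) (a p).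
Proof.
have := a_weight (t := [:: 1; 0; 0]) isT isT.
case: (pickP [pred p | has (predC1 0) (a p)]) => [p nzp _|none]; first by exists p.
rewrite (eq_card (B := predT)) ?card_ord // => i.
by rewrite !inE /= bdot_zero_form ?(negbT (none i)).
Qed.

Lemma forms_orthogonal i j : corr (a i) (a j) = if i == j then 18 else 0.
Proof.
have [p nzp] := exists_nonzero_form.
have nz k : has (predC1 0) (a k).
  by case: (eqVneq k p) => [->|kp] //; case: (nonzero_form_independent nzp kp).
case: eqVneq => [<-|ij].
  by have := trit_forms_dichotomy (a_words i) (a_words i); rewrite /forms_dichotomy nz => /and3P[_ /eqP].
by case: (nonzero_form_independent (nz i) (_ : j != i)); rewrite // eq_sym.
Qed.

End TernaryCode.

Lemma Z3_mul3 d (g : 'rV['Z_3]_d) : g *+ 3 = 0.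
Proof. by rewrite -scaler_nat (pchar_Zp (isT : 1 < 3)%N) scale0r. Qed.

Lemma trit_row_neq0 d t : t \in trit_words d -> has (predC1 0) t ->
  \row_(k < d) (t`_k)%:~R != 0 :> 'rV['Z_3]_d.
Proof.
rewrite mem_trit_words => /andP[/eqP st /allP tT] /(has_nthP 0)[k kt tk0].
have kd : (k < d)%N by rewrite -st.
apply/eqP => /rowP/(_ (Ordinal kd)); rewrite !mxE /=.
by move: tk0 (tT _ (mem_nth 0 kt)); rewrite !inE => /= /negPf-> /orP[]/eqP->.
Qed.

Section LatticeMembership.
Variables (R : realType) (m n : nat) (B : 'M[R]_(m, n)).

Lemma in_latticeP x :
  in_lattice B x <-> exists c : 'I_m -> int, x = \sum_i (c i)%:~R *: row i B.
Proof.
split=> [[z ->]|[c ->]]; first by exists (fun i => z 0 i); rewrite mulmx_sum_row;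
  apply: eq_bigr => i _; rewrite mxE.
by exists (\row_i c i); rewrite mulmx_sum_row; apply: eq_bigr => i _; rewrite !mxE.
Qed.

Lemma in_lattice0 : in_lattice B 0.
Proof. by apply/in_latticeP; exists (fun=> 0); rewrite big1 // => i _; rewrite scale0r. Qed.

Lemma in_latticeD x y : in_lattice B x -> in_lattice B y -> in_lattice B (x + y).
Proof.
move=> /in_latticeP[c ->] /in_latticeP[c' ->]; apply/in_latticeP; exists (fun i => c i + c' i).
by rewrite -big_split; apply: eq_bigr => i _; rewrite intrD scalerDl.
Qed.

Lemma in_latticeZ (k : int) x : in_lattice B x -> in_lattice B (k%:~R *: x).
Proof.
move=> /in_latticeP[c ->]; apply/in_latticeP; exists (fun i => k * c i).
by rewrite scaler_sumr; apply: eq_bigr => i _; rewrite scalerA intrM.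
Qed.

Lemma in_latticeB x y : in_lattice B x -> in_lattice B y -> in_lattice B (x - y).
Proof. by move=> xB /(in_latticeZ (-1)); rewrite mulrN1z scaleN1r; apply: in_latticeD. Qed.

Lemma in_latticeMn x k : in_lattice B x -> in_lattice B (x *+ k).
Proof. by move/(in_latticeZ k); rewrite -pmulrn scaler_nat. Qed.

Lemma in_lattice_sum p (c : 'I_p -> int) (F : 'I_p -> 'rV[R]_n) :
  (forall i, in_lattice B (F i)) -> in_lattice B (\sum_i (c i)%:~R *: F i).
Proof.
move=> FB; apply: (big_ind (in_lattice B)); [exact: in_lattice0|exact: in_latticeD|].
by move=> i _; apply: in_latticeZ.
Qed.

Lemma in_lattice_row i : in_lattice B (row i B).
Proof.
apply/in_latticeP; exists (fun j => (j == i)%:Z).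
by rewrite (bigD1 i) //= eqxx scale1r big1 ?addr0 // => j /negPf->; rewrite scale0r.
Qed.

End LatticeMembership.

Lemma in_lattice_sub (R : realType) m p n (B : 'M[R]_(m, n)) (V : 'M[R]_(p, n)) x :
  (forall i, in_lattice B (row i V)) -> in_lattice V x -> in_lattice B x.
Proof. by move=> VB /in_latticeP[c ->]; apply: in_lattice_sum. Qed.

Section Dot.
Variables (R : realType) (n : nat).
Implicit Types x y z : 'rV[R]_n.

Lemma dotE x y : dot x y = \sum_k x 0 k * y 0 k.
Proof. by rewrite /dot mxE; apply: eq_bigr => k _; rewrite mxE. Qed.

Lemma dotC x y : dot x y = dot y x.
Proof. by rewrite !dotE; apply: eq_bigr => k _; rewrite mulrC. Qed.

Lemma dotDl x y z : dot (x + y) z = dot x z + dot y z.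
Proof. by rewrite /dot mulmxDl mxE. Qed.

Lemma dotNl x y : dot (- x) y = - dot x y.
Proof. by rewrite /dot mulNmx mxE. Qed.

Lemma dotZl a x y : dot (a *: x) y = a * dot x y.
Proof. by rewrite /dot -scalemxAl mxE. Qed.

Lemma dot0l y : dot 0 y = 0.
Proof. by rewrite /dot mul0mx mxE. Qed.

Lemma dotDr x y z : dot x (y + z) = dot x y + dot x z.
Proof. by rewrite dotC dotDl !(dotC x). Qed.

Lemma dotNr x y : dot x (- y) = - dot x y.
Proof. by rewrite dotC dotNl dotC. Qed.

Lemma dotZr a x y : dot x (a *: y) = a * dot x y.
Proof. by rewrite dotC dotZl dotC. Qed.

Lemma dot_suml I (r : seq I) (P : pred I) (F : I -> 'rV[R]_n) y :
  dot (\sum_(i <- r | P i) F i) y = \sum_(i <- r | P i) dot (F i) y.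
Proof. by elim/big_rec2: _ => [|i u v _ <-]; rewrite ?dot0l ?dotDl. Qed.

Lemma dot_sumr I (r : seq I) (P : pred I) (F : I -> 'rV[R]_n) x :
  dot x (\sum_(i <- r | P i) F i) = \sum_(i <- r | P i) dot x (F i).
Proof. by rewrite dotC dot_suml; apply: eq_bigr => i _; rewrite dotC. Qed.

Lemma dotMnl x y k : dot (x *+ k) y = dot x y *+ k.
Proof. by rewrite -scaler_nat dotZl mulr_natl. Qed.

Lemma dotMnr x y k : dot x (y *+ k) = dot x y *+ k.
Proof. by rewrite dotC dotMnl dotC. Qed.

Lemma dot_ge0 x : 0 <= dot x x.
Proof. by rewrite dotE sumr_ge0 // => k _; rewrite -expr2 sqr_ge0. Qed.

Lemma dot_gt0 x : x != 0 -> 0 < dot x x.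
Proof.
move=> x0; rewrite lt_def dot_ge0 andbT; apply: contra x0.
rewrite dotE => /eqP/psumr_eq0P x2; apply/eqP/rowP => k; apply/eqP.
by rewrite mxE -sqrf_eq0 expr2 x2 // => j _; rewrite -expr2 sqr_ge0.
Qed.

End Dot.

Section TritCombinations.
Variables (R : realType) (n p : nat) (e : 'I_p -> 'rV[R]_n) (mu : R).
Hypothesis e_norm : forall i, dot (e i) (e i) = mu.

Lemma trit_weight_bound k (r : 'I_p -> int) y :
  y *+ k = \sum_i (r i)%:~R *: e i -> (forall i, r i \in trits) ->
  (forall i, r i != 0 -> mu <= dot (y - (r i)%:~R *: e i) (y - (r i)%:~R *: e i)) ->
  y != 0 -> (#|[pred i | r i == 0%R]| + 2 * k <= p)%N.
Proof.
move=> yk rT y_min y0; set N := dot y y.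
(* Since [r i ^ 2 = 1], [mu <= |y - r i e i|^2] reads [2 r i <y, e i> <= |y|^2]. *)
have step i : 2 * ((r i)%:~R * dot y (e i)) <= (r i != 0)%:R * N.
  have := y_min i; have := rT i; rewrite !inE => /or3P[] /eqP-> /=;
    rewrite ?mul0r ?mulr0 ?mulrN1z ?mulr1z //;
    rewrite !(dotDl, dotDr, dotNl, dotNr, dotZl, dotZr) e_norm (dotC (e i)) -/N => /(_ isT);
    lra.
have weight : (2 * k <= #|[pred i | r i != 0]|)%N.
  rewrite -(ler_nat R) -(ler_pM2r (dot_gt0 y0)) -/N natrM -mulrA.
  rewrite [k%:R * _]mulr_natl /N -dotMnr yk dot_sumr mulr_sumr -sum1_card natr_sum mulr_suml.
  rewrite [X in _ <= X]big_mkcond; apply: ler_sum => i _; rewrite dotZr inE.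
  by case: (r i != 0) (step i); rewrite ?mul1r ?mul0r.
rewrite -[X in (_ <= X)%N](card_ord p) -(cardC [pred i | r i == 0]) leq_add2l.
by apply: leq_trans weight (subset_leq_card _); apply/subsetP => i; rewrite !inE.
Qed.

Lemma dot_sum_orthogonal_combinations (T : Type) (s : seq T) (w : T -> 'I_p -> int) (c : int) :
  (forall i j, \sum_(t <- s) w t i * w t j = if i == j then c else 0) ->
  \sum_(t <- s) dot (\sum_i (w t i)%:~R *: e i) (\sum_i (w t i)%:~R *: e i) = (c%:~R * mu) *+ p.
Proof.
move=> orth.
have inner i j : \sum_(t <- s) (w t i)%:~R * dot (e i) ((w t j)%:~R *: e j) =
    if i == j then c%:~R * mu else 0.
  transitivity ((\sum_(t <- s) w t i * w t j)%:~R * dot (e i) (e j)).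
    by rewrite rmorph_sum mulr_suml; apply: eq_bigr => t _; rewrite dotZr mulrA -intrM.
  by rewrite orth; case: eqP => [->|_]; rewrite ?e_norm ?mul0r.
under eq_bigr do rewrite dot_suml; under eq_bigr do under eq_bigr do rewrite dotZl dot_sumr mulr_sumr.
transitivity (\sum_(i < p) c%:~R * mu); last by rewrite sumr_const card_ord.
rewrite exchange_big; apply: eq_bigr => i _.
rewrite exchange_big (bigD1 i) //= inner eqxx big1 ?addr0 // => j ji.
by rewrite inner eq_sym (negPf ji).
Qed.

End TritCombinations.

Lemma minimal_vec_dot_eq (R : realType) n (B : 'M[R]_n) v w :
  minimal_vec B v -> minimal_vec B w -> dot v v = dot w w.
Proof. by move=> [vB v0 vmin] [wB w0 wmin]; apply/eqP; rewrite eq_le vmin ?wmin. Qed.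

Section AdditiveOnLattice.
Variables (R : realType) (m n : nat) (B : 'M[R]_(m, n)) (G : zmodType) (f : 'rV[R]_n -> G).
Hypothesis fD : forall x y, in_lattice B x -> in_lattice B y -> f (x + y) = f x + f y.

Lemma lattice_additive0 : f 0 = 0.
Proof. by apply/(addrI (f 0)); rewrite -fD ?addr0 //; apply: in_lattice0. Qed.

Lemma lattice_additiveB x y : in_lattice B x -> in_lattice B y -> f (x - y) = f x - f y.
Proof.
move=> xB yB; apply/(addIr (f y)); rewrite subrK -fD ?subrK //.
by apply: in_latticeB.
Qed.

Lemma lattice_additiveMn x k : in_lattice B x -> f (x *+ k) = f x *+ k.
Proof.
move=> xB; elim: k => [|k IH]; first by rewrite !mulr0n lattice_additive0.
by rewrite !mulrS fD ?IH //; apply: in_latticeMn.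
Qed.

Lemma lattice_additiveN x : in_lattice B x -> f (- x) = - f x.
Proof.
move=> xB; rewrite -[- x]sub0r lattice_additiveB ?lattice_additive0 ?sub0r //.
exact: in_lattice0.
Qed.

Lemma lattice_additiveZ (k : int) x : in_lattice B x -> f (k%:~R *: x) = f x *~ k.
Proof.
move=> xB; have fZn j : f (j%:R *: x) = f x *+ j by rewrite scaler_nat lattice_additiveMn.
case: k => k; first by rewrite -!pmulrn fZn.
rewrite NegzE mulrNz scaleNr lattice_additiveN; last exact: in_latticeZ.
by rewrite mulrNz -!pmulrn fZn.
Qed.

Lemma lattice_additive_sum p (c : 'I_p -> int) (F : 'I_p -> 'rV[R]_n) :
  (forall i, in_lattice B (F i)) -> f (\sum_i (c i)%:~R *: F i) = \sum_i f (F i) *~ c i.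
Proof.
move=> FB; pose P x g := in_lattice B x /\ f x = g.
suff [] : P (\sum_i (c i)%:~R *: F i) (\sum_i f (F i) *~ c i) by [].
apply: (big_rec2 P); first by split; [apply: in_lattice0 | apply: lattice_additive0].
move=> i x g _ [xB <-]; split; first by apply: in_latticeD => //; apply: in_latticeZ.
by rewrite fD ?lattice_additiveZ //; apply: in_latticeZ.
Qed.

End AdditiveOnLattice.

Definition balance (R : realType) n (V : 'M[R]_n) (x : 'rV[R]_n) (s : 'I_n -> int) :=
  x - \sum_i ((s i - balmod3 (s i)) %/ 3)%Z%:~R *: row i V.

Lemma balance_mul3 (R : realType) n (V : 'M[R]_n) x s :
  x *+ 3 = \sum_i (s i)%:~R *: row i V ->
  balance V x s *+ 3 = \sum_i (balmod3 (s i))%:~R *: row i V.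
Proof.
rewrite /balance mulrnBl => ->; rewrite -sumrMnl -sumrB; apply: eq_bigr => i _.
rewrite scalerMnl -scalerBl; congr (_ *: _).
by rewrite {1}(balmod3E (s i)) intrD intrM; ring.
Qed.

Section LatticeQuotient.
Variables (R : realType) (n d : nat) (B V : 'M[R]_n) (f : 'rV[R]_n -> 'rV['Z_3]_d).
Hypothesis V_sub : forall i, in_lattice B (row i V).
Hypothesis fD : forall x y, in_lattice B x -> in_lattice B y -> f (x + y) = f x + f y.
Hypothesis f_onto : forall g, exists2 x, in_lattice B x & f x = g.
Hypothesis f_ker : forall x, in_lattice B x -> (f x = 0 <-> in_lattice V x).

Lemma quotient_vanish x : in_lattice V x -> f x = 0.
Proof. by move=> xV; apply/f_ker => //; apply: in_lattice_sub xV. Qed.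

Lemma quotient_mul3 x : in_lattice B x ->
  exists s : 'I_n -> int, x *+ 3 = \sum_i (s i)%:~R *: row i V.
Proof.
move=> xB; apply/in_latticeP/f_ker; first exact: in_latticeMn.
by rewrite (lattice_additiveMn fD) // Z3_mul3.
Qed.

Lemma balance_lattice x s : in_lattice B x -> in_lattice B (balance V x s).
Proof.
move=> xB; apply: in_latticeB => //; apply: in_lattice_sub V_sub _.
by apply: in_lattice_sum => i; apply: in_lattice_row.
Qed.

Lemma quotient_balance x s : in_lattice B x -> f (balance V x s) = f x.
Proof.
move=> xB; have qV : in_lattice V (\sum_i ((s i - balmod3 (s i)) %/ 3)%Z%:~R *: row i V).
  by apply: in_lattice_sum => i; apply: in_lattice_row.
by rewrite (lattice_additiveB fD) ?(quotient_vanish qV) ?subr0 //; apply: in_lattice_sub V_sub qV.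
Qed.

Lemma quotient_trit_code : exists (a : 'I_n -> seq int) (y : seq int -> 'rV[R]_n),
  [/\ forall i, a i \in trit_words d,
      forall t, in_lattice B (y t),
      forall t, f (y t) = \row_k (t`_k)%:~R &
      forall t, y t *+ 3 = \sum_i (bdot (a i) t)%:~R *: row i V].
Proof.
(* Lift the basis vectors of (Z/3)^d, then lift [t] to the corresponding integer
   combination of these lifts, balanced modulo L'. *)
have basis k : exists b : 'rV[R]_n * ('I_n -> int),
    [/\ in_lattice B b.1, f b.1 = delta_mx 0 k,
        b.1 *+ 3 = \sum_i (b.2 i)%:~R *: row i V & forall i, b.2 i \in trits].
  have [x xB fx] := f_onto (delta_mx 0 k).
  have [s xs] := quotient_mul3 xB.
  exists (balance V x s, fun i => balmod3 (s i)); split => /=.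
  - exact: balance_lattice.
  - by rewrite quotient_balance.
  - exact: balance_mul3.
  - by move=> i; apply: balmod3_trit.
have [b /all_and4[bB fb b3 bT]] := fin_all_exists basis.
pose r k i := (b k).2 i.
pose s t i := \sum_(k < d) r k i * t`_k.
exists (fun i => [seq r k i | k <- enum 'I_d]).
exists (fun t => balance V (\sum_(k < d) (t`_k)%:~R *: (b k).1) (s t)).
have xB t : in_lattice B (\sum_(k < d) (t`_k)%:~R *: (b k).1) by apply: in_lattice_sum.
split.
- move=> i; rewrite mem_trit_words size_map size_enum_ord eqxx.
  by apply/allP => _ /mapP[k _ ->]; apply: bT.
- by move=> t; apply: balance_lattice.
- move=> t; rewrite quotient_balance // (lattice_additive_sum fD) //.
  apply/rowP => k; rewrite summxE (bigD1 k) //= big1 ?addr0 => [|j jk].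
    by rewrite fb -scaler_int !mxE !eqxx mulr1.
  by rewrite fb -scaler_int !mxE eqxx /= eq_sym (negPf jk) mulr0.
- move=> t; rewrite (balance_mul3 (s := s t)).
    apply: eq_bigr => i _; congr ((balmod3 _)%:~R *: _).
    rewrite size_map size_enum_ord big_mkord; apply: eq_bigr => k _.
    by rewrite (nth_map k) ?size_enum_ord // nth_ord_enum.
  rewrite -sumrMnl; under eq_bigr do rewrite scalerMnr b3 scaler_sumr.
  rewrite exchange_big; apply: eq_bigr => i _; rewrite rmorph_sum scaler_suml.
  by apply: eq_bigr => k _; rewrite scalerA -intrM mulrC.
Qed.

End LatticeQuotient.

Section MinimalCode.
Variables (R : realType) (n d : nat) (B V : 'M[R]_n) (f : 'rV[R]_n -> 'rV['Z_3]_d).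
Variables (a : 'I_n -> seq int) (y : seq int -> 'rV[R]_n) (mu : R).
Hypothesis V_sub : forall i, in_lattice B (row i V).
Hypothesis V_norm : forall i, dot (row i V) (row i V) = mu.
Hypothesis B_min : forall w, in_lattice B w -> w != 0 -> mu <= dot w w.
Hypothesis f_vanish : forall x, in_lattice V x -> f x = 0.
Hypothesis yB : forall t, in_lattice B (y t).
Hypothesis fy : forall t, f (y t) = \row_k (t`_k)%:~R.
Hypothesis y3 : forall t, y t *+ 3 = \sum_i (bdot (a i) t)%:~R *: row i V.

Lemma code_vector_subV_neq0 t w : t \in trit_words d -> has (predC1 0) t ->
  in_lattice V w -> y t - w != 0.
Proof.
move=> tw tnz wV; apply: contraNneq (trit_row_neq0 tw tnz) => /eqP.
by rewrite subr_eq0 => /eqP yw; apply/eqP; rewrite -fy yw f_vanish.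
Qed.

Lemma code_min_weight t : t \in trit_words d -> has (predC1 0) t ->
  (#|[pred i | bdot (a i) t == 0%R]| + 6 <= n)%N.
Proof.
move=> tw tnz; apply: (trit_weight_bound V_norm (y3 t) (fun i => balmod3_trit _)).
  move=> i _; apply: B_min; first by apply: in_latticeB; [apply: yB | apply: in_latticeZ].
  by apply: code_vector_subV_neq0 => //; apply: in_latticeZ; apply: in_lattice_row.
by rewrite -[y t]subr0; apply: code_vector_subV_neq0 => //; apply: in_lattice0.
Qed.

Lemma code_norm_sum_lower :
  (9 * mu) *+ count (has (predC1 0)) (trit_words d)
    <= \sum_(t <- trit_words d) dot (y t *+ 3) (y t *+ 3).
Proof.
rewrite (bigID (has (predC1 0))) -[X in X <= _]addr0 lerD ?sumr_ge0 //; last first.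
  by move=> t _; apply: dot_ge0.
rewrite -iter_addr_0 -big_const_seq big_seq_cond [X in _ <= X]big_seq_cond.
apply: ler_sum => t /andP[tw tnz].
rewrite dotMnl dotMnr -mulrnA -[_ *+ (3 * 3)]mulr_natl ler_pM2l // B_min //.
by rewrite -[y t]subr0; apply: code_vector_subV_neq0 => //; apply: in_lattice0.
Qed.

End MinimalCode.

Theorem lemma7p6 (R : realType) :
  ~ exists (B V : 'M[R]_9),
      [/\ B \in unitmx, well_rounded B,
          (forall i, minimal_vec B (row i V)), row_free V &
          quot_iso B V ('rV['Z_3]_3)].
Proof.
case=> B [V] [_ _ V_min _ [f [fD f_onto f_ker]]].
have V_sub i : in_lattice B (row i V) by case: (V_min i).
have [a [y [a_words yB fy y3]]] := quotient_trit_code V_sub fD f_onto f_ker.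
pose m := dot (row 0 V) (row 0 V).
have V_norm i : dot (row i V) (row i V) = m := minimal_vec_dot_eq (V_min i) (V_min 0).
have [_ V0 B_min] := V_min 0.
have f_vanish := quotient_vanish V_sub f_ker.
have orth := forms_orthogonal a_words (code_min_weight V_sub V_norm B_min f_vanish yB fy y3).
have total : \sum_(t <- trit_words 3) dot (y t *+ 3) (y t *+ 3) = (18%:~R * m) *+ 9.
  under eq_bigr do rewrite y3.
  exact: (dot_sum_orthogonal_combinations (e := fun i => row i V) V_norm orth).
have := code_norm_sum_lower B_min f_vanish yB fy.
by rewrite count_nonzero_trit_words total -/m; have : 0 < m := dot_gt0 V0; lra.
Qed.
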